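(* Consider the saturated Poisson log-linear model with corner-point constraints fitted to an $l^m$ contingency table. Suppose exactly one cell has a zero count, $y_{\mathbf{i}}=0$ for some $\mathbf{i}=(i_1,\dots,i_m)\in L$, and all other counts are positive. Let $e_0=\{j: i_j\neq 0\}$. Then the parameter corresponding to that cell, $\theta^{e_0}_{(i_j)_{j\in e_0}}$ (the intercept $\theta$ if $e_0=\emptyset$), is nonestimable. So is every parameter associated with a higher order interaction given it, i.e. every $\theta^{e}_{\mathbf{k}}$ with $e\supsetneq e_0$, $k_j=i_j$ for $j\in e_0$, and $k_j\in\{1,\dots,l-1\}$ for $j\in e\setminus e_0$.
   Context: Cells of an $l^m$ table are indexed by $\mathbf{i}=(i_1,\dots,i_m)\in L=\{0,1,\dots,l-1\}^m$, so there are $n=l^m$ cells. The counts $y_{\mathbf{i}}$ are observations of independent Poisson variables $Y_{\mathbf{i}}$ with means $\mu_{\mathbf{i}}>0$. Saturated log-linear model with corner-point constraints: for $e\subseteq\{1,\dots,m\}$, $\mathbf{i}_e=(i_j)_{j\in e}$ and $\operatorname{supp}(\mathbf{i})=\{j:i_j\neq 0\}$, $$\log\mu_{\mathbf{i}}=\sum_{e\subseteq \operatorname{supp}(\mathbf{i})}\theta^{e}_{\mathbf{i}_e}.$$ Any parameter involving level $0$ of some variable is set to zero, so the free parameters are $\theta^{e}_{\mathbf{k}}$ with $\mathbf{k}\in\{1,\dots,l-1\}^{e}$. The case $e=\emptyset$ is the intercept $\theta$. There are $p=l^m$ parameters, collected in $\boldsymbol\theta$. Equivalently $\log\boldsymbol\mu=A\boldsymbol\theta$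 for an $n\times p$ 0/1 design matrix $A$. The parameter corresponding to cell $\mathbf{i}$ is the parameter with the largest set of variables in its superscript among those appearing in $\log\mu_{\mathbf{i}}$, namely $\theta^{\operatorname{supp}(\mathbf{i})}_{\mathbf{i}_{\operatorname{supp}(\mathbf{i})}}$. Derivative matrix: the $p\times n$ matrix $D$ with entries $D_{s\mathbf{i}}=\partial (y_{\mathbf{i}}\log\mu_{\mathbf{i}})/\partial\theta_s$, i.e. $D_{s\mathbf{i}}=y_{\mathbf{i}}A_{\mathbf{i}s}$. The model is parameter redundant if $\operatorname{rank}D<p$. A parameter $\theta_s$ is estimable if the $s$-th entry of $\boldsymbol\alpha$ is $0$ for every vector $\boldsymbol\alpha$ with $\boldsymbol\alpha^{\mathsf T}D=\mathbf 0$; otherwise it is nonestimable. *)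

From HB Require Import structures.
From mathcomp Require Import all_boot all_order all_algebra.
Set Implicit Arguments. Unset Strict Implicit. Unset Printing Implicit Defensive.
Import Order.TTheory GRing.Theory Num.Theory.
Local Open Scope ring_scope.

Definition cell (l m : nat) := {ffun 'I_m -> 'I_l}.

Definition supp (l m : nat) (i : cell l m) : {set 'I_m} :=
  [set j | nat_of_ord (i j) != 0%N].

(* Free parameters theta^e_k, e subset of {1..m}, k in {1..l-1}^e, are
   indexed by the cell s with supp(s) = e and s_e = k (the cell to which the
   parameter corresponds).  This is a bijection; e = supp s, k = s restricted
   to supp s.  The intercept theta corresponds to the all-zero cell. *)
Definition param (l m : nat) := cell l m.

(* Design matrix entry A_{i s}: 1 iff theta^{supp s}_{s_{supp s}} appears in
   log mu_i = sum_{e subset supp(i)} theta^e_{i_e}, i.e. iff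
   supp s \subset supp i and s_j = i_j on supp s. *)
Definition design (R : nzRingType) (l m : nat) (i : cell l m) (s : param l m) : R :=
  if (supp s \subset supp i) && [forall j in supp s, s j == i j] then 1 else 0.

Definition derivD (R : nzRingType) (l m : nat) (y : cell l m -> nat)
    (s : param l m) (i : cell l m) : R :=
  (y i)%:R * design R i s.

Definition nonestimable (R : nzRingType) (l m : nat) (y : cell l m -> nat)
    (s : param l m) : Prop :=
  exists alpha : param l m -> R,
    (forall i : cell l m, \sum_(t : param l m) alpha t * derivD R y t i = 0)
    /\ alpha s != 0.

From HB Require Import structures.
From mathcomp Require Import all_boot all_order all_algebra.
Import Order.TTheory GRing.Theory Num.Theory.
Local Open Scope ring_scope.

(* The design matrix of the saturated corner-point model is a
   tensor product over the m coordinates: A_{i t} = prod_k c(i_k, t_k), where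
   the one-variable incidence c(u, v) is 1 iff v = 0 or v = u.  The one-variable
   matrix c has an explicit inverse row w(u, .) : for u <> 0 it is the unit
   vector at u, for u = 0 it is (1, -1, ..., -1).  Hence the product vector
   alpha_{i0}(t) = prod_k w(i0_k, t_k) satisfies
     sum_t alpha_{i0}(t) A_{i t} = [i = i0],
   i.e. alpha_{i0} is row i0 of A^{-1}.  Multiplying column i by y_i, we get
   alpha_{i0}^T D = y_{i0} e_{i0} = 0 when the cell i0 is empty.  Finally
   alpha_{i0}(s) <> 0 exactly when s agrees with i0 on supp(i0), which covers
   the parameter of cell i0 and all higher-order interactions containing it.
   The one-variable facts are proved first, then lifted to the table by the
   tensor-product structure. *)

Section CornerPointInverse.

Variables (R : idomainType) (l m : nat).

(* One-variable design entry: level v enters log mu at level u iff v = 0 or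
   v = u (corner-point constraint). *)
Definition incidence (u v : 'I_l) : R :=
  ((nat_of_ord v != 0%N) ==> (v == u))%:R.

Lemma prod_indicator (I : finType) (P : pred I) :
  \prod_(k : I) (P k)%:R = [forall k, P k]%:R :> R.
Proof.
case: (boolP [forall k, P k]) => [/forallP HP | ].
  by apply: big1 => k _; rewrite HP.
rewrite negb_forall => /existsP [k Hk].
by rewrite (bigD1 k) //= (negbTE Hk) mul0r.
Qed.

Lemma design_tensor (i t : cell l m) :
  design R i t = \prod_(k : 'I_m) incidence (i k) (t k).
Proof.
rewrite /incidence prod_indicator /design.
have -> : (supp t \subset supp i) && [forall j in supp t, t j == i j] =
          [forall k, (nat_of_ord (t k) != 0%N) ==> (t k == i k)].
  apply/andP/forallP => [[_ /forallP Hagree] k | Hk].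
    by apply/implyP => Hk; have := Hagree k; rewrite inE Hk.
  split.
  - apply/subsetP => k; rewrite !inE => Hk0.
    by have := Hk k; rewrite Hk0 => /eqP <-.
  - apply/forallP => k; apply/implyP; rewrite inE => Hk0.
    by have := Hk k; rewrite Hk0.
by case: ifP.
Qed.

Definition inverse_weight (u v : 'I_l) : R :=
  if nat_of_ord u != 0%N then (v == u)%:R
  else if nat_of_ord v == 0%N then 1 else -1.

Lemma inverse_weightK (u x : 'I_l) :
  \sum_(v : 'I_l) inverse_weight u v * incidence x v = (x == u)%:R.
Proof.
rewrite /inverse_weight /incidence.
have [Hu | Hu0] := eqVneq (nat_of_ord u) 0%N; last first.
  rewrite (bigD1 u) //= big1 => [|v /negbTE ->]; last by rewrite mul0r.
  by rewrite Hu0 eqxx /= eq_sym; case: eqP; rewrite ?mulr1 ?mulr0 addr0.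
have nz v : v != u -> nat_of_ord v != 0%N.
  by apply: contra => /eqP Hv; apply/eqP/val_inj; rewrite /= Hv Hu.
rewrite (bigD1 u) //= Hu eqxx /= mulr1.
have [-> | Hxu] := eqVneq x u.
  by rewrite big1 ?addr0 // => v Hv; rewrite nz //= (negbTE Hv) mulr0.
rewrite (bigD1 x) //= big1 => [|v /andP [Hvu Hvx]]; last first.
  by rewrite nz //= (negbTE Hvx) mulr0.
by rewrite (negbTE (nz _ Hxu)) /= eqxx mulr1 addr0 subrr.
Qed.

Definition inverse_row (i0 t : cell l m) : R :=
  \prod_(k : 'I_m) inverse_weight (i0 k) (t k).

Lemma inverse_rowK (i0 i : cell l m) :
  \sum_(t : cell l m) inverse_row i0 t * design R i t = (i == i0)%:R.
Proof.
under eq_bigr => t _ do rewrite design_tensor /inverse_row -big_split /=.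
rewrite -(bigA_distr_bigA (fun k v => inverse_weight (i0 k) v * incidence (i k) v)).
under eq_bigr => k _ do rewrite inverse_weightK.
rewrite prod_indicator; congr ((nat_of_bool _)%:R).
apply/idP/eqP => [/forallP H | ->]; last exact/forallP.
by apply/ffunP => k; apply/eqP.
Qed.

Lemma inverse_row_neq0 (i0 s : cell l m) :
  (forall k : 'I_m, k \in supp i0 -> s k = i0 k) -> inverse_row i0 s != 0.
Proof.
move=> Hagree; apply/prodf_neq0 => k _; rewrite /inverse_weight.
case: ifP => [Hk | _]; last by case: ifP; rewrite ?oppr_eq0 oner_eq0.
by rewrite Hagree ?inE // eqxx oner_eq0.
Qed.

End CornerPointInverse.

Theorem theorem1 (R : realFieldType) (l m : nat) (y : cell l m -> nat)
    (i0 : cell l m)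
    (hzero : y i0 = 0%N)
    (hpos : forall i : cell l m, i != i0 -> (0 < y i)%N)
    (s : param l m)
    (hsupp : supp i0 \subset supp s)
    (hagree : forall j : 'I_m, j \in supp i0 -> s j = i0 j) :
  nonestimable R y s.
Proof.
exists (@inverse_row R l m i0); split; last exact: inverse_row_neq0.
move=> i.
(* alpha^T D = y_i [i = i0], which vanishes because the cell i0 is empty. *)
under eq_bigr => t _ do rewrite /derivD mulrCA.
rewrite -mulr_sumr inverse_rowK.
by have [->|_] := eqVneq i i0; rewrite ?hzero ?mul0r ?mulr0.
Qed.
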